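(* Let $n>3$ be an integer and let $G=C_{2n}(2,1,n)$ (a $5$-regular circulant graph). Then $G$ is word-representable and $R(G)\leq 3$. Furthermore, for $n=3$, the graph $C_6(2,1,3)$ is word-representable and $R(C_6(2,1,3))=1$.
   Context: Two distinct letters $x,y$ alternate in a word $w$ if, after deleting all other letters from $w$, the resulting word is of the form $xyxy\cdots$ or $yxyx\cdots$ (of even or odd length). A graph $G=(V,E)$ is word-representable if there is a word $w$ over the alphabet $V$, containing every letter of $V$ at least once, such that for all distinct $x,y\in V$, $xy\in E$ if and only if $x$ and $y$ alternate in $w$. A word is $k$-uniform if every letter occurs in it exactly $k$ times; $G$ is $k$-representable if some $k$-uniform word represents it, and the representation number $R(G)$ of a word-representable graph $G$ is the least such $k$. For an integer $m$ and a set $R$ of positive integers each at most $m/2$, the circulant graph $C_m(R)$ has vertex set $\{0,1,\dots,m-1\}$, with $i$ and $j$ adjacent iff $\min(|i-j|,\,m-|i-j|)\in R$. $C_{2n}(2,1,n)$ denotes the circulant graph on $2n$ vertices with jump set $\{1,2,n\}$. *)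

From mathcomp Require Import all_boot.
Set Implicit Arguments. Unset Strict Implicit. Unset Printing Implicit Defensive.

(* A graph on a finite vertex type V is given by its adjacency relation. *)

Definition restrict2 {V : eqType} (w : seq V) (x y : V) : seq V :=
  [seq z <- w | (z == x) || (z == y)].

Definition alternate {V : eqType} (w : seq V) (x y : V) : Prop :=
  exists len : nat,
    restrict2 w x y = mkseq (fun i => if odd i then y else x) len \/
    restrict2 w x y = mkseq (fun i => if odd i then x else y) len.

Definition represents {V : finType} (e : rel V) (w : seq V) : Prop :=
  (forall v : V, v \in w) /\
  (forall x y : V, x != y -> (e x y <-> alternate w x y)).

Definition word_representable {V : finType} (e : rel V) : Prop :=
  exists w : seq V, represents e w.

Definition uniform {V : eqType} (k : nat) (w : seq V) : Prop :=
  forall v : V, count_mem v w = k.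

Definition k_representable {V : finType} (e : rel V) (k : nat) : Prop :=
  exists w : seq V, uniform k w /\ represents e w.

Definition is_representation_number {V : finType} (e : rel V) (k : nat) : Prop :=
  k_representable e k /\ forall j, j < k -> ~ k_representable e j.

Definition circulant (m : nat) (R : seq nat) : rel 'I_m :=
  fun i j => let d := maxn i j - minn i j in minn d (m - d) \in R.

Definition C2n_21n (n : nat) : rel 'I_(2 * n) := @circulant (2 * n) [:: 1; 2; n].
Arguments C2n_21n n : clear implicits.
Arguments circulant m R : clear implicits.

(* Two distinct letters x, y alternate in w iff one of them, say x, leads in
   every prefix: #y <= #x <= #y + 1.  When both occur exactly three times this
   says that their occurrence positions interleave.  For n > 3 take the 3-uniform
   word made of the blocks (j, j + n + 2, j + 3) (mod 2n), j = 0, ..., 2n - 1: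
   vertex x then occurs at the positions 3x, 3(x - n - 2) + 1 and 3(x - 3) + 2
   (block indices mod 2n), and a case analysis shows that the occurrences of x
   and y interleave exactly when x - y is congruent to +-1, +-2 or n mod 2n.
   For n = 3 the graph is K_6, represented by any permutation of its vertices. *)

From mathcomp Require Import all_boot zify.
From Stdlib Require Import Classical.

Section Alternation.
Context {V : eqType}.
Implicit Types (x y a : V) (w : seq V).

Definition alt_word x y n : seq V := mkseq (fun i => if odd i then y else x) n.

Lemma alt_wordS x y n : alt_word x y n.+1 = x :: alt_word y x n.
Proof.
rewrite /alt_word /mkseq /= -add1n iotaDl -map_comp.
by congr cons; apply: eq_map => i /=; case: odd.
Qed.

Lemma restrict2C w x y : restrict2 w x y = restrict2 w y x.
Proof. by apply: eq_filter => z; rewrite orbC. Qed.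

Definition balanced x y w : Prop :=
  forall k, count_mem y (take k w) <= count_mem x (take k w) <= (count_mem y (take k w)).+1.

Lemma balanced_cons_first x y w : x != y -> balanced x y (x :: w) <-> balanced y x w.
Proof.
move=> xy; split=> [bal k | bal [|k] //].
- by have := bal k.+1; rewrite /= eqxx (negbTE xy); lia.
- by have := bal k; rewrite /= eqxx (negbTE xy); lia.
Qed.

Lemma balanced_cons_second x y w : x != y -> ~ balanced x y (y :: w).
Proof. by move=> xy /(_ 1); rewrite /= take0 eqxx eq_sym (negbTE xy). Qed.

Lemma balanced_cons_other a x y w : a != x -> a != y -> balanced x y (a :: w) <-> balanced x y w.
Proof.
move=> /negbTE ax /negbTE ay.
by split => [bal k | bal [|k]] //=; [have := bal k.+1 | have := bal k]; rewrite /= ax ay.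
Qed.

Lemma restrict2_alt_word_balanced w x y :
  x != y -> (exists len, restrict2 w x y = alt_word x y len) <-> balanced x y w.
Proof.
elim: w x y => [|a w IH] x y xy; first by split=> // _; exists 0.
have [->|ax] := eqVneq a x.
  rewrite /restrict2 /= eqxx -/(restrict2 w x y) restrict2C.
  rewrite balanced_cons_first // -IH 1?eq_sym //.
  split=> [[[|len] //] | [len E]]; last by exists len.+1; rewrite alt_wordS E.
  by rewrite alt_wordS => -[E]; exists len.
have [->|ay] := eqVneq a y.
  rewrite /restrict2 /= eqxx orbT.
  split=> [[[|len] //] | /balanced_cons_second //].
  by rewrite alt_wordS => -[/eqP]; rewrite eq_sym (negbTE xy).
rewrite /restrict2 /= (negbTE ax) (negbTE ay) -/(restrict2 w x y).
by rewrite balanced_cons_other // -IH.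
Qed.

Lemma alternate_balanced w x y :
  x != y -> alternate w x y <-> balanced x y w \/ balanced y x w.
Proof.
move=> xy; rewrite -restrict2_alt_word_balanced // -restrict2_alt_word_balanced 1?eq_sym //.
rewrite [restrict2 w y x]restrict2C.
by split=> [[len [E|E]] | [[len E]|[len E]]]; [left|right|..]; exists len; auto.
Qed.

Lemma alternate_uniq w x y : uniq w -> x \in w -> y \in w -> x != y -> alternate w x y.
Proof.
move=> uw xw yw xy; apply/alternate_balanced => //.
have count_take z k : z \in w -> count_mem z (take k w) = (index z w < k).
  by move=> zw; rewrite count_uniq_mem ?take_uniq // in_take.
have [lt|gt|eq] := ltngtP (index x w) (index y w).
- by left=> k; rewrite !count_take //; lia.
- by right=> k; rewrite !count_take //; lia.
- by move/(congr1 (nth x w)): eq; rewrite !nth_index // => /eqP; rewrite (negbTE xy).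
Qed.

End Alternation.

Definition interleaved (a b : seq nat) : Prop :=
  sorted ltn (flatten [seq [:: p.1; p.2] | p <- zip a b]).

Lemma balanced_positions_interleaved (a b : seq nat) :
  size a = 3 -> size b = 3 -> sorted ltn a -> sorted ltn b -> ~~ has (mem a) b ->
  (forall k, count (fun p => p < k) b <= count (fun p => p < k) a
                                      <= (count (fun p => p < k) b).+1)
  <-> interleaved a b.
Proof.
case: a => [|a0 [|a1 [|a2 []]]] //; case: b => [|b0 [|b1 [|b2 []]]] // _ _.
rewrite /interleaved /= !inE !andbT => /andP[a01 a12] /andP[b01 b12] disj.
split=> [bal | ilv k]; last lia.
apply/and5P; split.
- by have := bal b0.+1; lia.
- by have := bal a1.+1; lia.
- by have := bal b1.+1; lia.
- by have := bal a2.+1; lia.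
- by have := bal b2.+1; lia.
Qed.

Lemma count_mem_iota (s : seq nat) m :
  uniq s -> count (mem s) (iota 0 m) = count (fun p => p < m) s.
Proof.
move=> us; rewrite -!size_filter; apply/perm_size/uniq_perm.
- exact/filter_uniq/iota_uniq.
- exact: filter_uniq.
- by move=> p; rewrite !mem_filter mem_iota add0n andbC.
Qed.

Lemma least_witness (P : nat -> Prop) k :
  P k -> exists j, j <= k /\ P j /\ forall i, i < j -> ~ P i.
Proof.
elim/ltn_ind: k => k IH Pk.
have [[i lt_ik Pi] | no_smaller] := classic (exists2 i, i < k & P i).
  have [j [le_ji minj]] := IH i lt_ik Pi.
  by exists j; split=> //; apply: leq_trans le_ji (ltnW lt_ik).
by exists k; split=> //; split=> // i lt_ik Pi; apply: no_smaller; exists i.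
Qed.

Lemma k_representable_word_representable {V : finType} (e : rel V) k :
  k_representable e k -> word_representable e.
Proof. by case=> w [_ rep]; exists w. Qed.

Lemma representation_number_le {V : finType} (e : rel V) k :
  k_representable e k -> exists j, j <= k /\ is_representation_number e j.
Proof. by move/least_witness. Qed.

Lemma not_0_representable {V : finType} (e : rel V) (v : V) : ~ k_representable e 0.
Proof. by case=> w [unif [inw _]]; have := inw v; rewrite -has_pred1 has_count unif. Qed.

Lemma uniform_enum (T : finType) : uniform 1 (enum T).
Proof. by move=> v; rewrite count_uniq_mem ?enum_uniq ?mem_enum. Qed.

Lemma circulant_sym m R : symmetric (circulant m R).
Proof. by move=> x y; rewrite /circulant maxnC [minn x _]minnC. Qed.

Section CirculantWord.
Variable n : nat.
Hypothesis n_gt3 : 3 < n.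

Definition circ_shift s j := if j + s < 2 * n then j + s else j + s - 2 * n.

Definition circ_letter p :=
  let j := p %/ 3 in
  if p %% 3 == 0 then j else if p %% 3 == 1 then circ_shift (n + 2) j else circ_shift 3 j.

Definition circ_occ x : seq nat :=
  if x < 3 then [:: 3 * x; 3 * (x + n - 2) + 1; 3 * (x + 2 * n - 3) + 2]
  else if x < n + 2 then [:: 3 * (x - 3) + 2; 3 * x; 3 * (x + n - 2) + 1]
  else [:: 3 * (x - n - 2) + 1; 3 * (x - 3) + 2; 3 * x].

Lemma circ_letter_eq p x : x < 2 * n -> p < 6 * n ->
  (circ_letter p == x) = (p \in circ_occ x).
Proof.
move=> x_lt p_lt; rewrite /circ_letter /circ_shift /circ_occ.
by case: (ltnP x 3) => ?; [|case: (ltnP x (n + 2)) => ?]; rewrite !inE;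
  repeat case: ifP => ?; lia.
Qed.

Lemma circ_letter_lt p : p < 6 * n -> circ_letter p < 2 * n.
Proof. by move=> p_lt; rewrite /circ_letter /circ_shift; repeat case: ifP => ?; lia. Qed.

Lemma size_circ_occ x : size (circ_occ x) = 3.
Proof. by rewrite /circ_occ; repeat case: ifP. Qed.

Lemma circ_occ_sorted x : x < 2 * n -> sorted ltn (circ_occ x).
Proof. by move=> x_lt; rewrite /circ_occ; repeat case: ifP => ? /=; lia. Qed.

Lemma circ_occ_lt {x} : x < 2 * n -> all (fun p => p < 6 * n) (circ_occ x).
Proof. by move=> x_lt; rewrite /circ_occ; repeat case: ifP => ? /=; lia. Qed.

Lemma circ_adj_lt x y : x < y < 2 * n ->
  minn (y - x) (2 * n - (y - x)) \in [:: 1; 2; n] <->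
  interleaved (circ_occ x) (circ_occ y) \/ interleaved (circ_occ y) (circ_occ x).
Proof.
move=> xy; rewrite /interleaved /circ_occ !inE.
case: (ltnP x 3) => ?; [|case: (ltnP x (n + 2)) => ?];
case: (ltnP y 3) => ?; try case: (ltnP y (n + 2)) => ?; rewrite /= !andbT.
all: split; lia.
Qed.

Lemma circ_adj (x y : 'I_(2 * n)) : x != y ->
  C2n_21n n x y <->
  interleaved (circ_occ x) (circ_occ y) \/ interleaved (circ_occ y) (circ_occ x).
Proof.
move=> xy; wlog lt_xy : x y xy / x < y => [wlog_lt | ].
  have [/wlog_lt-> // | gt | /val_inj eq] := ltngtP x y; last by rewrite eq eqxx in xy.
  by rewrite /C2n_21n circulant_sym or_comm; apply: (wlog_lt y x); rewrite // eq_sym.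
rewrite /C2n_21n /circulant (maxn_idPr (ltnW lt_xy)) (minn_idPl (ltnW lt_xy)).
by apply: circ_adj_lt; rewrite lt_xy ltn_ord.
Qed.

Lemma circ_occ_disjoint x y : x < 2 * n -> y < 2 * n -> x != y ->
  ~~ has (mem (circ_occ x)) (circ_occ y).
Proof.
move=> x_lt y_lt xy; apply/hasPn => p py; apply: contra xy => px.
have p_lt := allP (circ_occ_lt y_lt) p py.
have /eqP <- : circ_letter p == x by rewrite circ_letter_eq.
by rewrite circ_letter_eq.
Qed.

Definition circ_word_nat := mkseq circ_letter (6 * n).

Lemma count_take_circ_word_nat x k : x < 2 * n ->
  count_mem x (take k circ_word_nat) = count (fun p => p < k) (circ_occ x).
Proof.
move=> x_lt; rewrite -map_take count_map take_iota.
rewrite (@eq_in_count _ _ (mem (circ_occ x))); last first.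
  by move=> p; rewrite mem_iota leq_min => /andP[_ /andP[_ p_lt]] /=; rewrite circ_letter_eq.
rewrite count_mem_iota ?(sorted_uniq ltn_trans ltnn) ?circ_occ_sorted //.
by apply: eq_in_count => p /(allP (circ_occ_lt x_lt)) p_lt /=; rewrite leq_min p_lt andbT.
Qed.

Definition circ_word : seq 'I_(2 * n) := pmap insub circ_word_nat.

Lemma map_val_circ_word : map val circ_word = circ_word_nat.
Proof.
rewrite (pmap_filter (insubK _)); apply/all_filterP/allP => q /mapP[p].
rewrite mem_iota => /andP[_ p_lt] ->; case: insubP => //=.
by rewrite circ_letter_lt.
Qed.

Lemma size_circ_word : size circ_word = 6 * n.
Proof. by rewrite -(size_map val) map_val_circ_word size_mkseq. Qed.

Lemma count_take_circ_word (x : 'I_(2 * n)) k :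
  count_mem x (take k circ_word) = count (fun p => p < k) (circ_occ x).
Proof.
rewrite -count_take_circ_word_nat // -map_val_circ_word -map_take count_map.
by apply: eq_count => u /=; rewrite val_eqE.
Qed.

Lemma circ_word_uniform : uniform 3 circ_word.
Proof.
move=> x; rewrite -[circ_word]take_size count_take_circ_word size_circ_word.
by have := circ_occ_lt (ltn_ord x); rewrite all_count size_circ_occ => /eqP.
Qed.

Lemma circ_word_balanced (x y : 'I_(2 * n)) : x != y ->
  balanced x y circ_word <-> interleaved (circ_occ x) (circ_occ y).
Proof.
move=> xy; rewrite -balanced_positions_interleaved ?size_circ_occ ?circ_occ_sorted //;
  last exact: circ_occ_disjoint.
by split=> bal k; have := bal k; rewrite !count_take_circ_word.
Qed.

Lemma circ_word_represents : represents (C2n_21n n) circ_word.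
Proof.
split=> [v | x y xy]; first by rewrite -has_pred1 has_count circ_word_uniform.
by rewrite circ_adj // alternate_balanced // !circ_word_balanced // eq_sym.
Qed.

Lemma circ_3_representable : k_representable (C2n_21n n) 3.
Proof. by exists circ_word; split; [exact: circ_word_uniform | exact: circ_word_represents]. Qed.

End CirculantWord.

Lemma C6_complete (x y : 'I_(2 * 3)) : x != y -> C2n_21n 3 x y.
Proof.
rewrite -val_eqE /C2n_21n /circulant !inE => xy.
by move: xy => /= xy; have := ltn_ord x; have := ltn_ord y; lia.
Qed.

Lemma C6_represents : represents (C2n_21n 3) (enum 'I_(2 * 3)).
Proof.
split=> [v | x y xy]; first by rewrite mem_enum.
by split=> _; [apply: alternate_uniq; rewrite ?enum_uniq ?mem_enum | exact: C6_complete].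
Qed.

Lemma C6_1_representable : k_representable (C2n_21n 3) 1.
Proof. by exists (enum 'I_(2 * 3)); split; [exact: uniform_enum | exact: C6_represents]. Qed.

Theorem theorem29 :
  (forall n : nat, 3 < n ->
     word_representable (C2n_21n n) /\
     exists k : nat, k <= 3 /\ is_representation_number (C2n_21n n) k) /\
  (word_representable (C2n_21n 3) /\ is_representation_number (C2n_21n 3) 1).
Proof.
split=> [n n_gt3 | ].
  have rep3 := circ_3_representable n n_gt3.
  by split; [exact: k_representable_word_representable rep3 |
             exact: representation_number_le rep3].
split; first exact: k_representable_word_representable C6_1_representable.
split=> [ | [|i] // _]; first exact: C6_1_representable.
exact: not_0_representable ord0.
Qed.
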